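(* For all $t,s\in\Lambda^\infty$: if $t\to^\infty_\beta s$ and $t$ has a head normal form, then $s$ has a head normal form.
   Context: Fix an infinite set $V$ of variables and a set $C$ of constants with $V\cap C=\emptyset$, containing a distinguished constant $\bot$. $\Lambda^\infty$ is the set of infinitary lambda-terms: all finite and infinite terms generated coinductively by $t ::= c\mid x\mid t\,t\mid\lambda x.t$, identified up to $\alpha$-equivalence; $s[t/x]$ is capture-avoiding substitution; an atom is a variable or constant. $\to_\beta$ is the compatible closure of $\{((\lambda x.s)t,s[t/x])\}$, i.e. the least relation containing these pairs and closed under $s\to s'\Rightarrow st\to s't,\ ts\to ts',\ \lambda x.s\to\lambda x.s'$; $\to^*_\beta$ is its reflexive-transitive closure. A term is in head normal form (hnf) if it is $\lambda x_1\ldots x_m.\,a\,t_1\ldots t_n$ ($m,n\ge0$, $a$ an atom, $a\not\equiv\bot$); $t$ has a hnf if $t\to^*_\beta t'$ for some $t'$ in hnf. The infinitary closure $\to^\infty_\beta$ is the greatest relation such that whenever $s\to^\infty_\beta t$: $t\equiv a$ is an atom and $s\to^*_\beta a$; or $t\equiv t_1't_2'$, $s\to^*_\beta t_1t_2$ and $t_i\to^\infty_\beta t_i'$; or $t\equiv\lambda x.r'$, $s\to^*_\beta\lambda x.r$ and $r\to^\infty_\beta r'$. *)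

(* Infinitary lambda-terms with de Bruijn indices (alpha-equivalence
   built in), constants drawn from an arbitrary type C with a distinguished bot. *)
From Stdlib Require Import Arith.
Set Implicit Arguments.

Section Terms.
Variable C : Type.

CoInductive term : Type :=
| Var : nat -> term
| Const : C -> term
| App : term -> term -> term
| Lam : term -> term.

CoFixpoint shift (c d : nat) (t : term) : term :=
  match t with
  | Var n => Var (if n <? c then n else n + d)
  | Const a => Const a
  | App t1 t2 => App (shift c d t1) (shift c d t2)
  | Lam r => Lam (shift (S c) d r)
  end.

(* subst k u t : replace index k by u (lifted under k binders),
   decrementing the free indices above k; s[t/x] for s = body, k = 0 *)
CoFixpoint subst (k : nat) (u : term) (t : term) : term :=
  match t with
  | Var n => if n =? k then shift 0 k u
             else if n <? k then Var n else Var (pred n)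
  | Const a => Const a
  | App t1 t2 => App (subst k u t1) (subst k u t2)
  | Lam r => Lam (subst (S k) u r)
  end.

Inductive beta : term -> term -> Prop :=
| beta_root : forall s t, beta (App (Lam s) t) (subst 0 t s)
| beta_appl : forall s s' t, beta s s' -> beta (App s t) (App s' t)
| beta_appr : forall s s' t, beta s s' -> beta (App t s) (App t s')
| beta_lam : forall s s', beta s s' -> beta (Lam s) (Lam s').

Inductive beta_star : term -> term -> Prop :=
| star_refl : forall t, beta_star t t
| star_step : forall t u v, beta t u -> beta_star u v -> beta_star t v.

Inductive head_app (bot : C) : term -> Prop :=
| ha_var : forall n, head_app bot (Var n)
| ha_const : forall c, c <> bot -> head_app bot (Const c)
| ha_app : forall a b, head_app bot a -> head_app bot (App a b).

Inductive hnf (bot : C) : term -> Prop :=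
| hnf_base : forall t, head_app bot t -> hnf bot t
| hnf_lam : forall t, hnf bot t -> hnf bot (Lam t).

Definition has_hnf (bot : C) (t : term) : Prop :=
  exists t', beta_star t t' /\ hnf bot t'.

(* infinitary closure: greatest relation, hence coinductive *)
CoInductive beta_inf : term -> term -> Prop :=
| inf_var : forall s n, beta_star s (Var n) -> beta_inf s (Var n)
| inf_const : forall s c, beta_star s (Const c) -> beta_inf s (Const c)
| inf_app : forall s t1 t2 t1' t2',
    beta_star s (App t1 t2) -> beta_inf t1 t1' -> beta_inf t2 t2' ->
    beta_inf s (App t1' t2')
| inf_lam : forall s r r',
    beta_star s (Lam r) -> beta_inf r r' -> beta_inf s (Lam r').

End Terms.

(* Let [std t s] be standard infinitary reduction: [t] weak-head reduces to a
   term with the same root constructor as [s], and coinductively so for the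
   immediate subterms.  It is reflexive and closed under substitution, hence it
   absorbs beta-steps and infinitary beta-reduction on its right: from
   [t ->* h] and [t ->oo s] we get [std t h] and [std t s].  Reading [std t h]
   backwards, [t] reaches a head normal form by weak-head reduction iterated
   under the outer lambdas.  Reading [std t s] forwards, every weak-head step of
   [t] is matched in [s] by none or by one weak-head step; so this weak-head
   normalisation transfers from [t] to [s].  As terms are coinductive, the
   substitution laws behind all this hold only up to bisimilarity. *)

From Stdlib Require Import Arith Lia.

Local Arguments Var {C}.
Local Arguments Const {C}.
Local Arguments App {C}.
Local Arguments Lam {C}.

Section InfinitaryLambda.
Set Implicit Arguments.
Context {C : Type}.
Local Notation term := (term C).

Definition term_unfold (t : term) : term :=
  match t with
  | Var n => Var n
  | Const a => Const a
  | App a b => App a b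
  | Lam r => Lam r
  end.

Lemma term_unfold_eq (t : term) : t = term_unfold t.
Proof. now destruct t. Qed.

Lemma shift_var c d n :
  shift c d (Var n : term) = Var (if n <? c then n else n + d).
Proof. now rewrite (term_unfold_eq (shift _ _ _)). Qed.

Lemma shift_const c d (a : C) : shift c d (Const a) = Const a.
Proof. now rewrite (term_unfold_eq (shift _ _ _)). Qed.

Lemma shift_app c d (a b : term) :
  shift c d (App a b) = App (shift c d a) (shift c d b).
Proof. now rewrite (term_unfold_eq (shift _ _ _)). Qed.

Lemma shift_lam c d (r : term) : shift c d (Lam r) = Lam (shift (S c) d r).
Proof. now rewrite (term_unfold_eq (shift _ _ _)). Qed.

Lemma subst_var k (u : term) n :
  subst k u (Var n) = if n =? k then shift 0 k u
                      else if n <? k then Var n else Var (pred n).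
Proof.
  rewrite (term_unfold_eq (subst _ _ _)); simpl.
  destruct (n =? k); [symmetry; apply term_unfold_eq | now destruct (n <? k)].
Qed.

Lemma subst_const k u (a : C) : subst k u (Const a) = Const a.
Proof. now rewrite (term_unfold_eq (subst _ _ _)). Qed.

Lemma subst_app k (u a b : term) :
  subst k u (App a b) = App (subst k u a) (subst k u b).
Proof. now rewrite (term_unfold_eq (subst _ _ _)). Qed.

Lemma subst_lam k (u r : term) : subst k u (Lam r) = Lam (subst (S k) u r).
Proof. now rewrite (term_unfold_eq (subst _ _ _)). Qed.

Hint Rewrite shift_var shift_const shift_app shift_lam
  subst_var subst_const subst_app subst_lam : term_eqs.

CoInductive bisim : term -> term -> Prop :=
| bisim_var n : bisim (Var n) (Var n)
| bisim_const (a : C) : bisim (Const a) (Const a)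
| bisim_app a a' b b' : bisim a a' -> bisim b b' -> bisim (App a b) (App a' b')
| bisim_lam r r' : bisim r r' -> bisim (Lam r) (Lam r').

Lemma bisim_refl : forall t, bisim t t.
Proof. cofix CH; intros [n|a|a b|r]; constructor; apply CH. Qed.

Lemma bisim_sym : forall t u, bisim t u -> bisim u t.
Proof. cofix CH; intros t u []; constructor; apply CH; assumption. Qed.

Lemma bisim_trans : forall t u v, bisim t u -> bisim u v -> bisim t v.
Proof.
  cofix CH; intros t u v [] Huv; inversion Huv; subst; constructor;
    eapply CH; eassumption.
Qed.

Lemma bisim_var_eq n m : n = m -> bisim (Var n) (Var m).
Proof. intros ->; constructor. Qed.

Ltac index_arith :=
  autorewrite with term_eqs;
  repeat (match goal with
    | |- context [?x <? ?y] => destruct (Nat.ltb_spec x y)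
    | |- context [?x =? ?y] => destruct (Nat.eqb_spec x y)
    end; autorewrite with term_eqs);
  try (apply bisim_var_eq; lia); try lia.

Lemma shift_bisim : forall c d t t', bisim t t' -> bisim (shift c d t) (shift c d t').
Proof.
  cofix CH; intros c d t t' []; autorewrite with term_eqs; constructor; apply CH;
    assumption.
Qed.

Lemma subst_bisim : forall k u u' t t', bisim u u' -> bisim t t' ->
  bisim (subst k u t) (subst k u' t').
Proof.
  cofix CH; intros k u u' t t' Hu [n| | |]; autorewrite with term_eqs;
    try (constructor; apply CH; assumption).
  destruct (n =? k); [now apply shift_bisim | destruct (n <? k); constructor].
Qed.

Lemma shift_shift_comm j c d : forall b t,
  bisim (shift (b + j + c) d (shift b j t)) (shift b j (shift (b + c) d t)).
Proof.
  cofix CH; intros b [n|a|x y|r]; index_arith;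
    constructor; try apply CH; apply (CH (S b)).
Qed.

Lemma shift_shift_merge m i j : m <= i -> forall a q,
  bisim (shift (a + m) j (shift a i q)) (shift a (i + j) q).
Proof.
  intros Hmi; cofix CH; intros a [n|x|x y|r]; index_arith;
    constructor; try apply CH; apply (CH (S a)).
Qed.

Lemma subst_shift_cancel j k (u : term) : forall a q,
  bisim (subst (a + j) u (shift a (S (j + k)) q)) (shift a (j + k) q).
Proof.
  cofix CH; intros a [n|x|x y|r]; index_arith;
    constructor; try apply CH; apply (CH (S a)).
Qed.

Lemma subst_shift_comm j k (q : term) : forall b f,
  bisim (subst (b + j + k) q (shift b j f)) (shift b j (subst (b + k) q f)).
Proof.
  cofix CH; intros b [n|x|x y|r]; index_arith;
    try (constructor; try apply CH; apply (CH (S b))).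
  subst n; apply bisim_sym.
  replace (b + j + k) with (b + k + j) by lia.
  apply (shift_shift_merge (m := b) (i := b + k) j ltac:(lia) 0 q).
Qed.

Lemma shift_subst_comm c d (f : term) : forall j e,
  bisim (shift (j + c) d (subst j f e)) (subst j (shift c d f) (shift (S (j + c)) d e)).
Proof.
  cofix CH; intros j [n|x|x y|r]; index_arith;
    try (constructor; try apply CH; apply (CH (S j))).
  subst n; apply (shift_shift_comm j c d 0 f).
Qed.

Lemma subst_subst_comm k (q : term) : forall j f e,
  bisim (subst (j + k) q (subst j f e)) (subst j (subst k q f) (subst (S (j + k)) q e)).
Proof.
  cofix CH; intros j f [n|x|x y|r]; index_arith;
    try (constructor; try apply CH; apply (CH (S j))).
  - subst n; apply (subst_shift_comm j k q 0 f).
  - subst n; apply bisim_sym, (subst_shift_cancel j k (subst k q f) 0 q).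
Qed.

Inductive whs : term -> term -> Prop :=
| whs_root p q : whs (App (Lam p) q) (subst 0 q p)
| whs_app a a' b : whs a a' -> whs (App a b) (App a' b).

Inductive whstar : term -> term -> Prop :=
| whstar_refl t : whstar t t
| whstar_step t u v : whs t u -> whstar u v -> whstar t v.

Lemma whstar_trans t u v : whstar t u -> whstar u v -> whstar t v.
Proof. induction 1; intros; [assumption | econstructor; eauto]. Qed.

Lemma whstar_app a a' b : whstar a a' -> whstar (App a b) (App a' b).
Proof. induction 1; econstructor; eauto using whs_app. Qed.

Lemma whs_det x y1 : whs x y1 -> forall y2, whs x y2 -> y1 = y2.
Proof.
  induction 1 as [p q|a a' b Ha IH]; intros y2 H2;
    inversion H2 as [p0 q0|a0 a2 b0 Ha2]; subst.
  - reflexivity.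
  - inversion Ha2.
  - inversion Ha.
  - now rewrite (IH _ Ha2).
Qed.

Lemma whs_beta t u : whs t u -> beta t u.
Proof. induction 1; constructor; assumption. Qed.

Lemma whstar_beta t u : whstar t u -> beta_star t u.
Proof. induction 1; econstructor; eauto using whs_beta. Qed.

Lemma star_trans (t u v : term) : beta_star t u -> beta_star u v -> beta_star t v.
Proof. induction 1; intros; [assumption | econstructor; eauto]. Qed.

Lemma star_lam (r r' : term) : beta_star r r' -> beta_star (Lam r) (Lam r').
Proof. induction 1; econstructor; eauto using beta_lam. Qed.

Lemma whs_bisim Z Z' : whs Z Z' -> forall X, bisim X Z ->
  exists X', whs X X' /\ bisim X' Z'.
Proof.
  induction 1 as [p q|a a' b _ IH]; intros X HX;
    inversion HX as [| |a1 a2 b1 b2 Ha Hb|]; subst.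
  - inversion Ha as [| | |r1 r2 Hr]; subst.
    eexists; split; [constructor | now apply subst_bisim].
  - destruct (IH _ Ha) as [X' [HX' HX'b]].
    exists (App X' b1); split; constructor; assumption.
Qed.

Lemma whstar_lift (f : term -> term)
  (Hf : forall x y, whs x y -> exists y', whs (f x) y' /\ bisim y' (f y)) :
  forall x w X, whstar x w -> bisim X (f x) ->
  exists X', whstar X X' /\ bisim X' (f w).
Proof.
  intros x w X Hxw; revert X; induction Hxw as [x|x y w Hxy _ IH]; intros X HX.
  - exists X; split; [constructor | exact HX].
  - destruct (Hf _ _ Hxy) as [y' [Hy' Hy'b]].
    destruct (whs_bisim Hy' HX) as [X1 [HX1 HX1b]].
    destruct (IH X1 (bisim_trans HX1b Hy'b)) as [X' [HX' HX'b]].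
    exists X'; split; [econstructor; eassumption | exact HX'b].
Qed.

Lemma whstar_bisim x w X : whstar x w -> bisim X x ->
  exists X', whstar X X' /\ bisim X' w.
Proof.
  apply (whstar_lift (fun t => t)).
  intros y z Hyz; exists z; split; [exact Hyz | apply bisim_refl].
Qed.

Lemma whs_shift c d x y : whs x y ->
  exists y', whs (shift c d x) y' /\ bisim y' (shift c d y).
Proof.
  induction 1 as [p q|a a' b _ [y' [Hy' Hy'b]]]; autorewrite with term_eqs.
  - eexists; split; [constructor | apply bisim_sym, (shift_subst_comm c d q 0 p)].
  - eexists; split; constructor; eauto using bisim_refl.
Qed.

Lemma whs_subst k q x y : whs x y ->
  exists y', whs (subst k q x) y' /\ bisim y' (subst k q y).
Proof.
  induction 1 as [p q'|a a' b _ [y' [Hy' Hy'b]]]; autorewrite with term_eqs.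
  - eexists; split; [constructor | apply bisim_sym, (subst_subst_comm k q 0 q' p)].
  - eexists; split; constructor; eauto using bisim_refl.
Qed.

CoInductive std : term -> term -> Prop :=
| std_var t n : whstar t (Var n) -> std t (Var n)
| std_const t (c : C) : whstar t (Const c) -> std t (Const c)
| std_app t a b a' b' : whstar t (App a b) -> std a a' -> std b b' -> std t (App a' b')
| std_lam t r r' : whstar t (Lam r) -> std r r' -> std t (Lam r').

Inductive std_root : term -> term -> Prop :=
| std_root_var n : std_root (Var n) (Var n)
| std_root_const (c : C) : std_root (Const c) (Const c)
| std_root_app a b a' b' : std a a' -> std b b' -> std_root (App a b) (App a' b')
| std_root_lam r r' : std r r' -> std_root (Lam r) (Lam r').

Lemma std_root_std t s : std_root t s -> std t s.
Proof. destruct 1; econstructor; eauto; constructor. Qed.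

Lemma std_whstar_root t s : std t s -> exists W, whstar t W /\ std_root W s.
Proof. destruct 1; eexists; split; eauto; constructor; assumption. Qed.

Lemma std_whstar_l t t1 s : whstar t t1 -> std t1 s -> std t s.
Proof.
  intros Ht Hs; destruct Hs; econstructor; eauto; eapply whstar_trans; eassumption.
Qed.

Lemma std_refl : forall t, std t t.
Proof. cofix CH; intros [n|a|a b|r]; econstructor; try constructor; apply CH. Qed.

Lemma std_bisim : forall X X0 Y0 Y, bisim X X0 -> std X0 Y0 -> bisim Y0 Y -> std X Y.
Proof.
  cofix CH; intros X X0 Y0 Y HX Hstd HY.
  destruct Hstd as [X0 n W|X0 a W|X0 a b a' b' W Ha Hb|X0 r r' W Hr];
    destruct (whstar_bisim W HX) as [X1 [HX1 HX1b]];
    inversion HX1b; subst; inversion HY; subst.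
  - now constructor.
  - now constructor.
  - econstructor; [eassumption | eapply CH | eapply CH]; eassumption.
  - econstructor; [eassumption | eapply CH]; eassumption.
Qed.

Lemma std_shift_bisim : forall c d q q' X Y, std q q' ->
  bisim X (shift c d q) -> bisim Y (shift c d q') -> std X Y.
Proof.
  cofix CH; intros c d q q' X Y Hq HX HY.
  destruct Hq as [q n W|q a W|q a b a' b' W Ha Hb|q r r' W Hr];
    destruct (whstar_lift (shift c d) (whs_shift c d) W HX) as [X1 [HX1 HX1b]];
    autorewrite with term_eqs in HX1b, HY;
    inversion HX1b; subst; inversion HY; subst.
  - now constructor.
  - now constructor.
  - econstructor; [eassumption | eapply (CH c d a) | eapply (CH c d b)]; eassumption.
  - econstructor; [eassumption | eapply (CH (S c) d r)]; eassumption.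
Qed.

Lemma std_shift c d q q' : std q q' -> std (shift c d q) (shift c d q').
Proof. intros H; exact (std_shift_bisim c d H (bisim_refl _) (bisim_refl _)). Qed.

Lemma std_subst_bisim : forall k p p' q q' X Y, std p p' -> std q q' ->
  bisim X (subst k q p) -> bisim Y (subst k q' p') -> std X Y.
Proof.
  cofix CH; intros k p p' q q' X Y Hp Hq HX HY.
  destruct Hp as [p n W|p a W|p a b a' b' W Ha Hb|p r r' W Hr];
    destruct (whstar_lift (subst k q) (whs_subst k q) W HX) as [X1 [HX1 HX1b]];
    autorewrite with term_eqs in HX1b, HY.
  - destruct (n =? k).
    + eapply std_whstar_l; [eassumption|].
      eapply std_bisim; [eassumption | apply (std_shift 0 k Hq) | apply bisim_sym, HY].
    + destruct (n <? k); inversion HX1b; subst; inversion HY; subst; now constructor.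
  - inversion HX1b; subst; inversion HY; subst; now constructor.
  - inversion HX1b; subst; inversion HY; subst.
    econstructor; [eassumption | eapply (CH k a) | eapply (CH k b)]; eassumption.
  - inversion HX1b; subst; inversion HY; subst.
    econstructor; [eassumption | eapply (CH (S k) r)]; eassumption.
Qed.

Lemma std_subst k p p' q q' : std p p' -> std q q' ->
  std (subst k q p) (subst k q' p').
Proof. intros Hp Hq; exact (std_subst_bisim k Hp Hq (bisim_refl _) (bisim_refl _)). Qed.

Lemma std_beta u u' : beta u u' -> forall t, std t u -> std t u'.
Proof.
  induction 1; intros t0 H0.
  - inversion H0 as [| |t1 a b a' b' W Ha Hb|]; subst.
    inversion Ha as [| | |a1 r r' W2 Hr]; subst.
    apply std_whstar_l with (t1 := subst 0 b r).
    + eapply whstar_trans; [exact W|].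
      eapply whstar_trans; [apply whstar_app; exact W2|].
      econstructor; constructor.
    + now apply std_subst.
  - inversion H0; subst; econstructor; eauto.
  - inversion H0; subst; econstructor; eauto.
  - inversion H0; subst; econstructor; eauto.
Qed.

Lemma std_star u w : beta_star u w -> forall t, std t u -> std t w.
Proof. induction 1; eauto using std_beta. Qed.

Lemma std_beta_inf : forall x y z, std x y -> beta_inf y z -> std x z.
Proof.
  cofix CH; intros x y z Hxy Hyz.
  destruct Hyz as [y n Hs|y c Hs|y t1 t2 t1' t2' Hs H1 H2|y r r' Hs Hr];
    pose proof (std_star Hs Hxy) as Hx; try exact Hx; inversion Hx; subst.
  - econstructor; [eassumption | eapply CH | eapply CH]; eassumption.
  - econstructor; [eassumption | eapply CH]; eassumption.
Qed.

Definition whnf (t : term) : Prop := forall u, ~ whs t u.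

Lemma whnf_lam r : whnf (Lam r).
Proof. intros u Hu; inversion Hu. Qed.

Lemma whnf_head_app bot t : head_app bot t -> whnf t.
Proof.
  induction 1 as [| |a b Ha IH]; intros u Hu; inversion Hu; subst.
  - inversion Ha.
  - eapply IH; eassumption.
Qed.

Lemma whstar_whnf t u : whnf t -> whstar t u -> u = t.
Proof.
  intros Ht Htu; destruct Htu as [|t v u Htv _]; [reflexivity|].
  destruct (Ht v Htv).
Qed.

Lemma std_whnf_root t s : whnf t -> std t s -> std_root t s.
Proof.
  intros Ht Hs; destruct (std_whstar_root Hs) as [W [HW HWs]].
  now rewrite (whstar_whnf Ht HW) in HWs.
Qed.

Lemma std_whs_inv t t1 s : std t s -> whs t t1 -> std t1 s \/ std_root t s.
Proof.
  intros Hs Ht; destruct (std_whstar_root Hs) as [W [HW HWs]].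
  destruct HW as [|t u W Htu HuW]; [now right | left].
  rewrite <- (whs_det Htu Ht).
  exact (std_whstar_l HuW (std_root_std HWs)).
Qed.

Lemma std_whs_simulation t t1 : whs t t1 -> forall s, std t s ->
  std t1 s \/ exists s1, whs s s1 /\ std t1 s1.
Proof.
  induction 1 as [p q|a a1 b Ha IH]; intros s Hs.
  - destruct (std_whs_inv Hs (whs_root p q)) as [H|H]; [now left | right].
    inversion H as [| |f q0 f' q' Hf Hq|]; subst.
    apply std_whnf_root in Hf; [|apply whnf_lam].
    inversion Hf as [| | |p0 p' Hp]; subst.
    exists (subst 0 q' p'); split; [constructor | now apply std_subst].
  - destruct (std_whs_inv Hs (whs_app b Ha)) as [H|H]; [now left|].
    inversion H as [| |a0 b0 a' b' Ha' Hb|]; subst.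
    destruct (IH a' Ha') as [H1|[a1' [Hs1 H1]]].
    + left; apply std_root_std; now constructor.
    + right; exists (App a1' b'); split; [now constructor|].
      apply std_root_std; now constructor.
Qed.

Lemma std_whstar_simulation t G : whstar t G -> forall s, std t s ->
  exists G', whstar s G' /\ std G G'.
Proof.
  induction 1 as [t|t t1 G Ht _ IH]; intros s Hs.
  - exists s; split; [constructor | exact Hs].
  - destruct (std_whs_simulation Ht Hs) as [H|[s1 [Hs1 H]]]; [exact (IH s H)|].
    destruct (IH s1 H) as [G' [HG' HGG']].
    exists G'; split; [econstructor; eassumption | exact HGG'].
Qed.

Lemma std_head_app_target bot h : head_app bot h -> forall t, std t h ->
  exists G, whstar t G /\ head_app bot G.
Proof.
  induction 1 as [n|c Hc|a b Ha IH]; intros t Ht;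
    inversion Ht as [| |t0 a0 b0 a1 b1 W Ha0 Hb0|]; subst.
  - eexists; split; [eassumption | constructor].
  - eexists; split; [eassumption | now constructor].
  - destruct (IH a0 Ha0) as [G [HG HGa]].
    exists (App G b0); split; [|now constructor].
    eapply whstar_trans; [eassumption | now apply whstar_app].
Qed.

Lemma std_head_app_source bot G : head_app bot G -> forall s, std G s ->
  exists H, whstar s H /\ head_app bot H.
Proof.
  induction 1 as [n|c Hc|a b Ha IH]; intros s Hs;
    apply std_whnf_root in Hs; try (apply (whnf_head_app (bot := bot)); now constructor);
    inversion Hs as [| |a0 b0 a' b' Ha' Hb|]; subst.
  - eexists; split; constructor.
  - eexists; split; constructor; assumption.
  - destruct (IH a' Ha') as [H [HH HHa]].
    exists (App H b'); split; [now apply whstar_app | now constructor].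
Qed.

Inductive wh_hnf (bot : C) : term -> Prop :=
| wh_hnf_head t G : whstar t G -> head_app bot G -> wh_hnf bot t
| wh_hnf_lam t r : whstar t (Lam r) -> wh_hnf bot r -> wh_hnf bot t.

Lemma wh_hnf_has_hnf bot t : wh_hnf bot t -> has_hnf bot t.
Proof.
  induction 1 as [t G HG HGa|t r Hr _ [h [Hrh Hh]]].
  - exists G; split; [now apply whstar_beta | now constructor].
  - exists (Lam h); split; [|now constructor].
    exact (star_trans (whstar_beta Hr) (star_lam Hrh)).
Qed.

Lemma std_hnf_wh_hnf bot h : hnf bot h -> forall t, std t h -> wh_hnf bot t.
Proof.
  induction 1 as [h Hh|h _ IH]; intros t Ht.
  - destruct (std_head_app_target Hh Ht) as [G [HG HGa]].
    exact (wh_hnf_head HG HGa).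
  - inversion Ht as [| | |t0 r r' W Hr]; subst.
    exact (wh_hnf_lam W (IH r Hr)).
Qed.

Lemma wh_hnf_std bot t : wh_hnf bot t -> forall s, std t s -> wh_hnf bot s.
Proof.
  induction 1 as [t G HtG HG|t r Htr _ IH]; intros s Hs.
  - destruct (std_whstar_simulation HtG Hs) as [G' [HsG' HGG']].
    destruct (std_head_app_source HG HGG') as [H [HG'H HH]].
    exact (wh_hnf_head (whstar_trans HsG' HG'H) HH).
  - destruct (std_whstar_simulation Htr Hs) as [G' [HsG' HG']].
    apply std_whnf_root in HG'; [|apply whnf_lam].
    inversion HG' as [| | |r0 r' Hr]; subst.
    exact (wh_hnf_lam HsG' (IH r' Hr)).
Qed.

End InfinitaryLambda.

Theorem lemma5p20 (C : Type) (bot : C) (t s : term C) :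
  beta_inf t s -> has_hnf bot t -> has_hnf bot s.
Proof.
  intros Hts [h [Hth Hh]].
  assert (Hth_std : std t h) by exact (std_star Hth (std_refl t)).
  assert (Hts_std : std t s) by exact (std_beta_inf (std_refl t) Hts).
  exact (wh_hnf_has_hnf (wh_hnf_std (std_hnf_wh_hnf Hh Hth_std) Hts_std)).
Qed.
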